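(* Consider three qubits $A,B,C$, each with Hilbert space $\mathbb{C}^2$ and computational basis $\{|0\rangle,|1\rangle\}$. Define the unit vectors \[ |\psi_{AB}\rangle=\tfrac{1}{\sqrt{217}}\big(6|01\rangle-9|10\rangle-10|11\rangle\big)\in\mathbb{C}^2_A\otimes\mathbb{C}^2_B, \] \[ |\psi_{AC}\rangle=\tfrac{1}{\sqrt{46}}\big(-2|00\rangle-4|01\rangle-|10\rangle+5|11\rangle\big)\in\mathbb{C}^2_A\otimes\mathbb{C}^2_C, \] \[ |\psi_{BC}\rangle=\tfrac{1}{\sqrt{53}}\big(-6|00\rangle-|01\rangle-4|10\rangle\big)\in\mathbb{C}^2_B\otimes\mathbb{C}^2_C, \] and the operators on $\mathbb{C}^2_A\otimes\mathbb{C}^2_B\otimes\mathbb{C}^2_C$ \[ H=\tfrac16\Big(|\psi_{AB}\rangle\langle\psi_{AB}|\otimes I_C+|\psi_{AC}\rangle\langle\psi_{AC}|\otimes I_B+I_A\otimes|\psi_{BC}\rangle\langle\psi_{BC}|\Big), \] \[ H_{\mathrm{target}}=\tfrac16\Big(|0\rangle\langle0|_A\otimes|0\rangle\langle0|_B\otimes I_C+|0\rangle\langle0|_A\otimes I_B\otimes|0\rangle\langle0|_C+I_A\otimes|0\rangle\langle0|_B\otimes|0\rangle\langle0|_C\Big). \] Then the sum of the three largest eigenvalues of $H$ strictly exceeds $5/6$, which is the sum of the three largest eigenvalues of $H_{\mathrm{target}}$. Consequently $H\preceq H_{\mathrm{target}}$ fails; i.e., with $Q=I/2$ on $\mathbb{C}^2$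 (for which $|0\rangle$ is a maximal eigenvector), $n=3$, and $\mu$ the uniform probability measure on the 2-element subsets of $\{A,B,C\}$, there exist pure states $(|\psi_I\rangle)_I$ such that $\sum_I \mu_I |\psi_I\rangle\langle\psi_I|\otimes Q^{\otimes I^c}\not\preceq \sum_I\mu_I |q_1\rangle\langle q_1|^{\otimes I}\otimes Q^{\otimes I^c}$ (with $|q_1\rangle=|0\rangle$).
   Context: Operators such as $|\psi_{AC}\rangle\langle\psi_{AC}|\otimes I_B$ denote the operator acting as $|\psi_{AC}\rangle\langle\psi_{AC}|$ on qubits $A,C$ and as the identity on qubit $B$ (embedded in the ordering $A\otimes B\otimes C$); similarly for the other terms. For Hermitian matrices $X,Y$ of the same size, $X\preceq Y$ (majorization) means that, with eigenvalues listed in nonincreasing order, $\sum_{i=1}^k\lambda_i(X)\le\sum_{i=1}^k\lambda_i(Y)$ for every $k$, with equality when $k$ equals the dimension (equal traces). For $I\subseteq\{A,B,C\}$, $I^c$ is its complement and $Q^{\otimes I^c}$ is $Q$ tensored on the qubits in $I^c$. *)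

From HB Require Import structures.
From mathcomp Require Import all_boot all_order all_algebra all_field.
Set Implicit Arguments. Unset Strict Implicit. Unset Printing Implicit Defensive.
Import Order.TTheory GRing.Theory Num.Theory.
Local Open Scope ring_scope.
Local Open Scope sesquilinear_scope.

Definition eigen_desc n (A : 'M[algC]_n) (l : seq algC) : Prop :=
  [/\ size l = n, all (fun x => x \is Num.real) l,
      sorted (fun x y => y <= x) l
    & char_poly A = \prod_(x <- l) ('X - x%:P)].

Definition topsum (l : seq algC) (k : nat) : algC := \sum_(i < k) l`_i.

Definition majorized n (X Y : 'M[algC]_n) : Prop :=
  forall lx ly, eigen_desc X lx -> eigen_desc Y ly ->
    (forall k, (k < n)%N -> topsum lx k <= topsum ly k) /\ topsum lx n = topsum ly n.

Definition ket2 (a b : nat) : 'cV[algC]_4 := delta_mx (inord (2 * a + b)) 0.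
Definition ket0 : 'cV[algC]_2 := delta_mx 0 0.

Definition proj m (v : 'cV[algC]_m) : 'M[algC]_m := v *m v ^t*.

Definition unitvec m (v : 'cV[algC]_m) : Prop := v ^t* *m v = 1%:M.

(* Three qubits A,B,C, ordering A (x) B (x) C: index i = 4a + 2b + c. *)
Definition bitA (i : 'I_8) : nat := i %/ 4.
Definition bitB (i : 'I_8) : nat := (i %/ 2) %% 2.
Definition bitC (i : 'I_8) : nat := i %% 2.

(* M_{AB} (x) Q_C, M_{AC} (x) Q_B, Q_A (x) M_{BC}, with M on two qubits
   (index 2x+y) and Q on one qubit. *)
Definition embAB (M : 'M[algC]_4) (Q : 'M[algC]_2) : 'M[algC]_8 :=
  \matrix_(i, j) (M (inord (2 * bitA i + bitB i)) (inord (2 * bitA j + bitB j))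
                  * Q (inord (bitC i)) (inord (bitC j))).
Definition embAC (M : 'M[algC]_4) (Q : 'M[algC]_2) : 'M[algC]_8 :=
  \matrix_(i, j) (M (inord (2 * bitA i + bitC i)) (inord (2 * bitA j + bitC j))
                  * Q (inord (bitB i)) (inord (bitB j))).
Definition embBC (M : 'M[algC]_4) (Q : 'M[algC]_2) : 'M[algC]_8 :=
  \matrix_(i, j) (M (inord (2 * bitB i + bitC i)) (inord (2 * bitB j + bitC j))
                  * Q (inord (bitA i)) (inord (bitA j))).

Definition psiAB : 'cV[algC]_4 :=
  (sqrtC 217)^-1 *: (6 *: ket2 0 1 - 9 *: ket2 1 0 - 10 *: ket2 1 1).
Definition psiAC : 'cV[algC]_4 :=
  (sqrtC 46)^-1 *: (- 2 *: ket2 0 0 - 4 *: ket2 0 1 - ket2 1 0 + 5 *: ket2 1 1).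
Definition psiBC : 'cV[algC]_4 :=
  (sqrtC 53)^-1 *: (- 6 *: ket2 0 0 - ket2 0 1 - 4 *: ket2 1 0).

Definition Hmat : 'M[algC]_8 :=
  6^-1 *: (embAB (proj psiAB) 1%:M + embAC (proj psiAC) 1%:M + embBC (proj psiBC) 1%:M).

(* |0><0|_A (x) |0><0|_B = |00><00| *)
Definition Htarget : 'M[algC]_8 :=
  6^-1 *: (embAB (proj (ket2 0 0)) 1%:M + embAC (proj (ket2 0 0)) 1%:M
           + embBC (proj (ket2 0 0)) 1%:M).

(* General form: Q = I/2, mu uniform (1/3) on the 2-subsets {A,B},{A,C},{B,C}. *)
Definition Qhalf : 'M[algC]_2 := 2^-1 *: 1%:M.
Definition mu : algC := 3^-1.

Definition Hgen (pAB pAC pBC : 'cV[algC]_4) : 'M[algC]_8 :=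
  mu *: embAB (proj pAB) Qhalf + mu *: embAC (proj pAC) Qhalf
  + mu *: embBC (proj pBC) Qhalf.

Definition ktens (u v : 'cV[algC]_2) : 'cV[algC]_4 :=
  \col_(i < 4) (u (inord (i %/ 2)) 0 * v (inord (i %% 2)) 0).

Definition Hgen_target : 'M[algC]_8 :=
  let P := proj (ktens ket0 ket0) in
  mu *: embAB P Qhalf + mu *: embAC P Qhalf + mu *: embBC P Qhalf.

(* The eigenvalues of the Hermitian matrix H are real, and at a real t that is
   not an eigenvalue the sign of det (t - H) = prod_i (t - lambda_i) is
   (-1)^(number of eigenvalues above t).  Exact LDL^T factorisations of t - H
   give the signs -, +, - at t = 10/31, 17/54, 11/56; since the number of
   eigenvalues above t grows as t decreases, at least one, two and three
   eigenvalues lie above these thresholds, so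
   lambda_1 + lambda_2 + lambda_3 > 10/31 + 17/54 + 11/56 > 5/6.
   H_target is diagonal with spectrum 1/2, 1/6, 1/6, 1/6, 0, 0, 0, 0, and
   with Q = I/2 and mu uniform the general operators are H and H_target. *)

From mathcomp Require Import all_boot all_order all_algebra all_field.
From mathcomp Require Import ring zify.
From Stdlib Require DecimalNat.
Set Implicit Arguments.
Unset Strict Implicit.
Unset Printing Implicit Defensive.
Import Order.TTheory GRing.Theory Num.Theory.
Local Open Scope ring_scope.
Local Open Scope sesquilinear_scope.

Section SignCount.
Variable R : numDomainType.
Implicit Types (l : seq R) (t : R).

Lemma sign_prod_sub l t : all (fun z => z \is Num.real) l -> t \is Num.real ->
  \prod_(z <- l) (t - z) != 0 ->
  0 < (-1) ^+ count (fun z => t < z) l * \prod_(z <- l) (t - z).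
Proof.
move=> + tr; elim: l => [|z l IH] /=; first by rewrite big_nil mulr1 ltr01.
case/andP=> zr lr; rewrite big_cons mulf_eq0 negb_or => /andP[tz_neq0 /(IH lr)].
rewrite exprD mulrACA; apply: mulr_gt0.
have [tz|] /= := boolP (t < z); first by rewrite expr1 mulN1r oppr_gt0 subr_lt0.
rewrite expr0 mul1r subr_gt0 -(real_leNgt zr tr) le_eqVlt => /orP[/eqP zt|//].
by move: tz_neq0; rewrite zt subrr eqxx.
Qed.

Lemma odd_count_gt l t k : all (fun z => z \is Num.real) l -> t \is Num.real ->
  0 < (-1) ^+ k * \prod_(z <- l) (t - z) -> odd (count (fun z => t < z) l) = odd k.
Proof.
move=> lr tr sgn_k; have sgn_c := sign_prod_sub lr tr.
have /sgn_c : \prod_(z <- l) (t - z) != 0.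
  by apply: contraTneq sgn_k => ->; rewrite mulr0 ltxx.
move: sgn_k; rewrite -signr_odd -[(-1) ^+ count _ _]signr_odd.
case: (odd k); case: odd => //; rewrite expr0 expr1 mul1r mulN1r oppr_gt0.
- by move=> /lt_trans h /h; rewrite ltxx.
- by move=> + /lt_trans h => /h; rewrite ltxx.
Qed.

Lemma sorted_count_gt_nth l t k : sorted (fun x y => y <= x) l ->
  (k < count (fun z => (t < z)%R) l)%N -> t < l`_k.
Proof.
elim: l k => [//|x l IH] [|k] /= x_l; last first.
  by move=> lt_k; apply: IH (path_sorted x_l) _; move: lt_k; case: (t < x) => /=; lia.
have x_ge : all (fun y => y <= x) l.
  by apply: order_path_min x_l => a b c ba cb; apply: le_trans cb ba.
have [//|/negbTE tx] := boolP (t < x).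
rewrite add0n -has_count => /hasP[y yl ty].
by rewrite -tx (lt_le_trans ty (allP x_ge y yl)).
Qed.

Lemma sum_lt_of_alternating_signs l ts :
  all (fun z => z \is Num.real) l -> sorted (fun x y => y <= x) l ->
  all (fun z => z \is Num.real) ts -> sorted (fun x y => y < x) ts -> (0 < size ts)%N ->
  (forall i, (i < size ts)%N -> 0 < (-1) ^+ i.+1 * \prod_(z <- l) (ts`_i - z)) ->
  \sum_(i < size ts) ts`_i < \sum_(i < size ts) l`_i.
Proof.
move=> lr ls tsr tss ts_gt0 sgn.
have parity i (lt_i : (i < size ts)%N) :=
  odd_count_gt lr (allP tsr _ (mem_nth 0 lt_i)) (sgn i lt_i).
have count_gt i : (i < size ts)%N -> (i < count (fun z => (ts`_i < z)%R) l)%N.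
  elim: i => [|i IH] lt_i; first by have := parity 0%N lt_i; case: count.
  (* The count can only grow from ts`_i to ts`_i.+1, and its parity changes. *)
  have tsS_lt : ts`_i.+1 < ts`_i.
    have gt_trans : transitive (fun x y : R => y < x).
      by move=> y x z yx zy; apply: lt_trans zy yx.
    by apply: (sorted_ltn_nth gt_trans) => //; rewrite inE ltnW.
  have : (count (fun z => (ts`_i < z)%R) l <= count (fun z => (ts`_i.+1 < z)%R) l)%N.
    by apply: sub_count => z /=; apply: lt_trans.
  move/(leq_trans (IH (ltnW lt_i))); rewrite leq_eqVlt => /orP[/eqP c_eq|//].
  by have := parity _ lt_i; rewrite -c_eq /=; case: (odd i).
apply: ltr_sum => [|i _]; first by rewrite has_predT /index_enum -enumT size_enum_ord.
exact: sorted_count_gt_nth ls (count_gt i (ltn_ord i)).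
Qed.

End SignCount.

Lemma ltr_nat_frac (R : numFieldType) a b c d : (0 < b)%N -> (0 < d)%N ->
  (a%:R / b%:R < c%:R / d%:R :> R) = (a * d < c * b)%N.
Proof.
move=> b_gt0 d_gt0.
by rewrite ltr_pdivrMr ?ltr0n // mulrAC ltr_pdivlMr ?ltr0n // -!natrM ltr_nat.
Qed.

Lemma hermitian_eigenvalue_real (C : numClosedFieldType) n (A : 'M[C]_n) a :
  A ^t* = A -> eigenvalue A a -> a \is Num.real.
Proof.
move=> A_herm /eigenvalueP[v vA v_neq0].
have vv_gt0 : 0 < (v *m v ^t*) 0 0 by rewrite -dotmxE dnorm_gt0.
set X := v *m A *m v ^t*.
have X_herm : X ^t* = X by rewrite /X !trmx_mul !map_mxM trmxCK A_herm mulmxA.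
have : (X 0 0)^* = X 0 0 by rewrite -[in RHS]X_herm !mxE.
rewrite /X vA -scalemxAl mxE rmorphM /= (conj_Creal (gtr0_real vv_gt0)).
by move=> /(mulIf (lt0r_neq0 vv_gt0)) a_conj; rewrite CrealE a_conj.
Qed.

Lemma char_poly_horner (R : comNzRingType) n (A : 'M[R]_n) t :
  (char_poly A).[t] = \det (t%:M - A).
Proof.
rewrite /char_poly -[_.[t]]/(horner_eval t _) -det_map_mx; congr (\det _).
by apply/matrixP => i j; rewrite !mxE rmorphB rmorphMn /= !horner_evalE hornerX hornerC.
Qed.

Lemma hermitian_eigen_desc n (A : 'M[algC]_n) : A ^t* = A -> exists l, eigen_desc A l.
Proof.
move=> A_herm; have [r pA] := closed_field_poly_normal (char_poly A).
rewrite (monicP (char_poly_monic A)) scale1r in pA.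
have r_real : all (fun z => z \is Num.real) r.
  apply/allP => z z_r; apply: hermitian_eigenvalue_real A_herm _.
  by rewrite eigenvalue_root_char pA root_prod_XsubC.
exists (sort (fun x y => y <= x) r); split.
- by apply: succn_inj; rewrite size_sort -(size_prod_XsubC r id) -pA size_char_poly.
- by apply/allP => x; rewrite mem_sort; apply: (allP r_real).
- apply: (sort_sorted_in (P := fun z : algC => z \is Num.real)) r_real => x y xr yr /=.
  exact: real_leVge.
- by rewrite pA; apply: perm_big; rewrite perm_sym perm_sort.
Qed.

Lemma eigen_desc_det n (A : 'M[algC]_n) l t :
  eigen_desc A l -> \det (t%:M - A) = \prod_(z <- l) (t - z).
Proof.
case=> _ _ _ pA; rewrite -char_poly_horner pA horner_prod.
by apply: eq_bigr => z _; rewrite hornerXsubC.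
Qed.

Lemma topsum_gt_of_alternating_signs n (A : 'M[algC]_n) l ts :
  eigen_desc A l -> all (fun z => z \is Num.real) ts -> sorted (fun x y => y < x) ts ->
  (0 < size ts)%N ->
  (forall i, (i < size ts)%N -> 0 < (-1) ^+ i.+1 * \det ((ts`_i)%:M - A)) ->
  \sum_(i < size ts) ts`_i < topsum l (size ts).
Proof.
move=> Al tsr tss ts_gt0 sgn; have [_ lr ls _] := Al.
apply: sum_lt_of_alternating_signs => // i lt_i.
by rewrite -(eigen_desc_det _ Al) sgn.
Qed.

Lemma not_majorized_of_topsum n (X Y : 'M[algC]_n) lx ly k :
  eigen_desc X lx -> eigen_desc Y ly -> (k < n)%N -> topsum ly k < topsum lx k ->
  ~ majorized X Y.
Proof.
by move=> Xl Yl lt_k lt_top /(_ lx ly Xl Yl)[/(_ k lt_k)]; rewrite (lt_geF lt_top).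
Qed.

Section LDL.
Variables (R : comNzRingType) (n : nat).

Definition unit_lower (rows : seq (seq R)) : 'M[R]_n :=
  \matrix_(i, j) if (j < i)%N then (nth [::] rows i)`_j else (i == j)%:R.

Definition ldl_mx (rows : seq (seq R)) (d : seq R) : 'M[R]_n :=
  unit_lower rows *m diag_mx (\row_k d`_k) *m (unit_lower rows)^T.

Lemma det_unit_lower rows : \det (unit_lower rows) = 1.
Proof.
rewrite det_trig; last first.
  apply/is_trig_mxP => i j lt_ij.
  by rewrite mxE ltnNge (ltnW lt_ij) -val_eqE /= (ltn_eqF lt_ij).
by rewrite big1 // => i _; rewrite mxE ltnn eqxx.
Qed.

Lemma det_ldl_mx rows d : \det (ldl_mx rows d) = \prod_(k < n) d`_k.
Proof.
rewrite !det_mulmx det_tr det_unit_lower det_diag mul1r mulr1.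
by apply: eq_bigr => k _; rewrite mxE.
Qed.

Lemma ldl_mxE rows d i j :
  ldl_mx rows d i j = \sum_k unit_lower rows i k * d`_k * unit_lower rows j k.
Proof. by rewrite /ldl_mx mul_mx_diag mxE; apply: eq_bigr => k _; rewrite !mxE. Qed.

End LDL.

Arguments unit_lower {R n}.
Arguments ldl_mx {R n}.

(* Numerals above 5000 are parsed as [Nat.of_num_uint] applied to their
   decimal digits; unfolding them would build unary numbers, so simplification
   must leave them alone and their positivity is read off the digits. *)
Arguments Nat.of_num_uint : simpl never.

Lemma natr_uint_gt0 (R : numDomainType) (d : Decimal.uint) :
  Decimal.unorm d <> Decimal.zero -> 0 < (Nat.of_num_uint (Number.UIntDecimal d))%:R :> R.
Proof.
move=> d_neq0; rewrite ltr0n lt0n; apply/eqP.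
by move=> /(DecimalNat.Unsigned.of_iff d Decimal.zero).
Qed.

Lemma inv_sqrtC_normsq (c : nat) :
  (sqrtC c%:R)^-1 * ((sqrtC c%:R)^-1)^* = c%:R^-1 :> algC.
Proof.
have c_real : (sqrtC (c%:R : algC))^-1 \is Num.real.
  by rewrite rpredV ger0_real ?sqrtC_ge0.
by rewrite (conj_Creal c_real) -invfM -expr2 sqrtCK.
Qed.

Lemma proj_normalized (c : nat) m (s : seq int) :
  proj ((sqrtC c%:R)^-1 *: \col_(k < m) (s`_k)%:~R) =
  c%:R^-1 *: \matrix_(x, y) (s`_x * s`_y)%:~R.
Proof.
apply/matrixP => x y; rewrite !mxE big_ord1 !mxE rmorphM /= rmorph_int.
by rewrite mulrACA inv_sqrtC_normsq intrM.
Qed.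

Lemma unitvec_normalized (c : nat) m (s : seq int) :
  (0 < c)%N -> \sum_(k < m) s`_k ^+ 2 = c%:Z ->
  unitvec ((sqrtC c%:R)^-1 *: \col_(k < m) (s`_k)%:~R).
Proof.
move=> c_gt0 s_norm; apply/matrixP => i j; rewrite !ord1 !mxE.
under eq_bigr do rewrite !mxE rmorphM /= rmorph_int mulrACA [_^* * _]mulrC
  inv_sqrtC_normsq -intrM -expr2.
by rewrite -mulr_sumr -rmorph_sum s_norm mulVf // pnatr_eq0 -lt0n.
Qed.

Lemma proj_conjT m (v : 'cV[algC]_m) : (proj v) ^t* = proj v.
Proof. by apply/matrixP => i j; rewrite !mxE !big_ord1 !mxE rmorphM /= conjCK mulrC. Qed.

Lemma embAB_conjT M Q : (embAB M Q) ^t* = embAB (M ^t*) (Q ^t*).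
Proof. by apply/matrixP => i j; rewrite !mxE rmorphM. Qed.

Lemma embAC_conjT M Q : (embAC M Q) ^t* = embAC (M ^t*) (Q ^t*).
Proof. by apply/matrixP => i j; rewrite !mxE rmorphM. Qed.

Lemma embBC_conjT M Q : (embBC M Q) ^t* = embBC (M ^t*) (Q ^t*).
Proof. by apply/matrixP => i j; rewrite !mxE rmorphM. Qed.

Lemma embAB_Qhalf M : embAB M Qhalf = 2^-1 *: embAB M 1%:M.
Proof. by apply/matrixP => i j; rewrite !mxE mulrCA. Qed.

Lemma embAC_Qhalf M : embAC M Qhalf = 2^-1 *: embAC M 1%:M.
Proof. by apply/matrixP => i j; rewrite !mxE mulrCA. Qed.

Lemma embBC_Qhalf M : embBC M Qhalf = 2^-1 *: embBC M 1%:M.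
Proof. by apply/matrixP => i j; rewrite !mxE mulrCA. Qed.

Ltac ord4 i := case: i => [[|[|[|[|//]]]] ?].
Ltac ord8 i := case: i => [[|[|[|[|[|[|[|[|//]]]]]]]] ?].

Lemma psiAB_col : psiAB = (sqrtC 217)^-1 *: \col_k ([:: 0; 6; -9; -10]`_k)%:~R.
Proof.
congr (_ *: _); apply/matrixP => k j; rewrite (ord1 j) !mxE.
by ord4 k; rewrite -!val_eqE /= !inordK //=; ring.
Qed.

Lemma psiAC_col : psiAC = (sqrtC 46)^-1 *: \col_k ([:: -2; -4; -1; 5]`_k)%:~R.
Proof.
congr (_ *: _); apply/matrixP => k j; rewrite (ord1 j) !mxE.
by ord4 k; rewrite -!val_eqE /= !inordK //=; ring.
Qed.

Lemma psiBC_col : psiBC = (sqrtC 53)^-1 *: \col_k ([:: -6; -1; -4; 0]`_k)%:~R.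
Proof.
congr (_ *: _); apply/matrixP => k j; rewrite (ord1 j) !mxE.
by ord4 k; rewrite -!val_eqE /= !inordK //=; ring.
Qed.

Lemma Hmat_herm : Hmat ^t* = Hmat.
Proof.
have conj6 : (6^-1 : algC)^* = 6^-1 by rewrite conj_Creal // rpredV rpred_nat.
have conj1 : (1%:M : 'M[algC]_2) ^t* = 1%:M by rewrite trmx1 map_mx1.
rewrite /Hmat linearZ /= map_mxZ /= conj6; congr (_ *: _).
by rewrite !linearD /= !map_mxD embAB_conjT embAC_conjT embBC_conjT !proj_conjT conj1.
Qed.

Lemma unitvec_psi : [/\ unitvec psiAB, unitvec psiAC & unitvec psiBC].
Proof.
by rewrite psiAB_col psiAC_col psiBC_col; split; apply: unitvec_normalized;
  rewrite // !big_ord_recr big_ord0.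
Qed.

Definition Hint : 'M[algC]_8 := \matrix_(i, j) (nth [::] [::
  [:: 405356%:R; 151900%:R; 239568%:R; 0; 23002%:R; (- 115010%:R); 0; 0];
  [:: 151900%:R; 193998%:R; 39928%:R; 0; 46004%:R; (- 230020%:R); 0; 0];
  [:: 239568%:R; 39928%:R; 293484%:R; 92008%:R; (- 131652%:R); 0; (- 123278%:R);
      (- 115010%:R)];
  [:: 0; 0; 92008%:R; 271784%:R; 0; (- 131652%:R); 46004%:R; (- 376300%:R)];
  [:: 23002%:R; 46004%:R; (- 131652%:R); 0; 568331%:R; 2387%:R; 458988%:R; 0];
  [:: (- 115010%:R); (- 230020%:R); 0; (- 131652%:R); 2387%:R; 494985%:R; 39928%:R;
      219420%:R];
  [:: 0; 0; (- 123278%:R); 46004%:R; 458988%:R; 39928%:R; 415013%:R; (- 57505%:R)];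
  [:: 0; 0; (- 115010%:R); (- 376300%:R); 0; 219420%:R; (- 57505%:R); 531325%:R]] i)`_j.

Lemma Hmat_Hint : Hmat = (6 * 217 * 46 * 53)^-1 *: Hint.
Proof.
rewrite /Hmat psiAB_col psiAC_col psiBC_col !proj_normalized.
apply/matrixP => i j; rewrite !mxE.
by ord8 i; ord8 j; rewrite -!val_eqE /= !inordK //=; field.
Qed.

(* The factors below were computed in exact rational arithmetic; here they are
   only checked entrywise. *)
Ltac check_ldl_entry i j :=
  rewrite ldl_mxE !big_ord_recr big_ord0 /= !mxE;
  by ord8 i; ord8 j; rewrite /=; field.

Definition L_10_31 : seq (seq algC) := [::
  [:: ];
  [:: (- 5425%:R / 22093%:R)];
  [:: (- 8556%:R / 22093%:R); (- 127844%:R / 1026151%:R)];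
  [:: 0; 0; (- 63621362%:R / 432445607%:R)];
  [:: (- 1643%:R / 44186%:R); (- 66867%:R / 1026151%:R); (80424813%:R / 432445607%:R);
      (252930209%:R / 10918154656%:R)];
  [:: (8215%:R / 44186%:R); (334335%:R / 1026151%:R); (53047200%:R / 432445607%:R);
      (4225669663%:R / 21836309312%:R); (45091515155%:R / 16985672071994%:R)];
  [:: 0; 0; (170487659%:R / 864891214%:R); (- 205959691%:R / 5459077328%:R);
      (- 9519152591318%:R / 8492836035997%:R);
      (- 48152149039951%:R / 384554224143818%:R)];
  [:: 0; 0; (159053405%:R / 864891214%:R); (5812358995%:R / 10918154656%:R);
      (- 603238548465%:R / 8492836035997%:R);
      (- 308084404841865%:R / 384554224143818%:R);
      (- 209775873999555%:R / 343488332795407%:R)]].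

Definition d_10_31 : seq algC :=
  [:: (22093%:R / 113367%:R); (1026151%:R / 4109298%:R); (432445607%:R / 2194936989%:R);
      (21836309312%:R / 93840696719%:R); (8492836035997%:R / 62784848349328%:R);
      (192277112071909%:R / 1579667502695442%:R);
      (1717441663977035%:R / 143054171381500296%:R);
      (- 22313658292790%:R / 31944414949972851%:R)].

Lemma sub_Hmat_10_31_ldl : (10 / 31)%:M - Hmat = ldl_mx L_10_31 d_10_31.
Proof. by rewrite Hmat_Hint; apply/matrixP => i j; check_ldl_entry i j. Qed.

Lemma det_sub_Hmat_10_31 : \det ((10 / 31)%:M - Hmat) =
  - (55784145731975%:R / 181085869013830933110084%:R).
Proof. by rewrite sub_Hmat_10_31_ldl det_ldl_mx !big_ord_recr big_ord0 /=; field. Qed.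

Definition L_17_54 : seq (seq algC) := [::
  [:: ];
  [:: (- 3150%:R / 12317%:R)];
  [:: (- 4968%:R / 12317%:R); (- 5301%:R / 40150%:R)];
  [:: 0; 0; (- 156825900%:R / 1015590629%:R)];
  [:: (- 477%:R / 12317%:R); (- 1359%:R / 20075%:R); (196907922%:R / 1015590629%:R);
      (66880203768%:R / 2674301078833%:R)];
  [:: (2385%:R / 12317%:R); (1359%:R / 4015%:R); (137452140%:R / 1015590629%:R);
      (540262963854%:R / 2674301078833%:R); (1883445707817%:R / 1946958199709135%:R)];
  [:: 0; 0; (210125025%:R / 1015590629%:R); (- 101104360938%:R / 2674301078833%:R);
      (- 2325446069501736%:R / 1946958199709135%:R);
      (- 1679184245602296%:R / 11731997690227237%:R)];
  [:: 0; 0; (196032375%:R / 1015590629%:R); (1477370674350%:R / 2674301078833%:R);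
      (- 31011610798332%:R / 389391639941827%:R);
      (- 10418682691550160%:R / 11731997690227237%:R);
      (817576851509415%:R / 597424570920811%:R)]].

Definition d_17_54 : seq algC :=
  [:: (12317%:R / 65826%:R); (80300%:R / 332559%:R); (1015590629%:R / 5410493550%:R);
      (2674301078833%:R / 11900690990622%:R);
      (1946958199709135%:R / 15307699375240092%:R);
      (11731997690227237%:R / 105135742784293290%:R);
      (- 10156217705653787%:R / 1267055750544541596%:R);
      (- 31333752808844%:R / 16130463414861897%:R)].

Lemma sub_Hmat_17_54_ldl : (17 / 54)%:M - Hmat = ldl_mx L_17_54 d_17_54.
Proof. by rewrite Hmat_Hint; apply/matrixP => i j; check_ldl_entry i j. Qed.

Lemma det_sub_Hmat_17_54 : \det ((17 / 54)%:M - Hmat) =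
  133168449437587%:R / 316196439186727510007184%:R.
Proof. by rewrite sub_Hmat_17_54_ldl det_ldl_mx !big_ord_recr big_ord0 /=; field. Qed.

Definition L_11_56 : seq (seq algC) := [::
  [:: ];
  [:: (- 392%:R / 563%:R)];
  [:: (- 15456%:R / 14075%:R); (- 560%:R / 877%:R)];
  [:: 0; 0; (76123600%:R / 53816363%:R)];
  [:: (- 1484%:R / 14075%:R); (- 168%:R / 877%:R); (- 55260168%:R / 53816363%:R);
      (- 2780627584%:R / 14182691671%:R)];
  [:: (1484%:R / 2815%:R); (840%:R / 877%:R); (- 268316160%:R / 53816363%:R);
      (- 9626579944%:R / 14182691671%:R); (4482511680178%:R / 1205983742083%:R)];
  [:: 0; 0; (- 101995100%:R / 53816363%:R); (- 6486263672%:R / 14182691671%:R);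
      (- 4980984884888%:R / 1205983742083%:R);
      (- 116243792357728%:R / 5782563067583%:R)];
  [:: 0; 0; (- 95154500%:R / 53816363%:R); (6287187400%:R / 14182691671%:R);
      (2121461875680%:R / 1205983742083%:R); (6103745682120%:R / 5782563067583%:R);
      (- 271911446054010%:R / 10834331674455169%:R)]].

Definition d_11_56 : seq algC :=
  [:: (14075%:R / 204792%:R); (9647%:R / 94584%:R); (- 53816363%:R / 2626264200%:R);
      (14182691671%:R / 93425206168%:R); (1205983742083%:R / 42094228879528%:R);
      (- 5782563067583%:R / 202605268669944%:R);
      (10834331674455169%:R / 971470595353944%:R);
      (- 1103862172546573%:R / 1820167721308468392%:R)].

Lemma sub_Hmat_11_56_ldl : (11 / 56)%:M - Hmat = ldl_mx L_11_56 d_11_56.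
Proof. by rewrite Hmat_Hint; apply/matrixP => i j; check_ldl_entry i j. Qed.

Lemma det_sub_Hmat_11_56 : \det ((11 / 56)%:M - Hmat) =
  - (12142483898012303%:R / 100684482745756035468754944%:R).
Proof. by rewrite sub_Hmat_11_56_ldl det_ldl_mx !big_ord_recr big_ord0 /=; field. Qed.

Lemma Hmat_top3_gt : exists l, eigen_desc Hmat l /\ 5 / 6 < topsum l 3.
Proof.
have [l Hl] := hermitian_eigen_desc Hmat_herm; exists l; split => //.
pose ts : seq algC := [:: 10 / 31; 17 / 54; 11 / 56].
have ts_real : all (fun z => z \is Num.real) ts by rewrite /= !rpredM ?rpredV ?rpred_nat.
have ts_sorted : sorted (fun x y => y < x) ts by rewrite /= !ltr_nat_frac.
have ts_signs i : (i < size ts)%N -> 0 < (-1) ^+ i.+1 * \det ((ts`_i)%:M - Hmat).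
  case: i => [|[|[|//]]] _ /=.
  - by rewrite det_sub_Hmat_10_31 expr1 mulN1r opprK divr_gt0 ?natr_uint_gt0.
  - by rewrite det_sub_Hmat_17_54 expr2 mulN1r opprK mul1r divr_gt0 ?natr_uint_gt0.
  - by rewrite det_sub_Hmat_11_56 -signr_odd expr1 mulN1r opprK divr_gt0 ?natr_uint_gt0.
have ts_sum : \sum_(i < size ts) ts`_i = 5 / 6 + 23 / 46872%:R.
  by rewrite !big_ord_recr big_ord0 /=; field.
have := topsum_gt_of_alternating_signs Hl ts_real ts_sorted isT ts_signs.
by rewrite ts_sum; apply: le_lt_trans; rewrite lerDl divr_ge0 ?ler0n.
Qed.

Lemma Htarget_diag :
  Htarget = diag_mx (\row_k [:: 2^-1; 6^-1; 6^-1; 0; 6^-1; 0; 0; 0]`_k).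
Proof.
apply/matrixP => i j; rewrite !mxE !big_ord1 !mxE !rmorph_nat.
by ord8 i; ord8 j; rewrite -!val_eqE /= !inordK //=; field.
Qed.

Lemma Htarget_eigen_desc : eigen_desc Htarget [:: 2^-1; 6^-1; 6^-1; 6^-1; 0; 0; 0; 0].
Proof.
split=> //.
- by rewrite /= !(rpred0, rpredV, rpred_nat).
- by rewrite /= !le_refl invr_ge0 ler0n lef_pV2 ?posrE ?ltr0n ?ler_nat.
rewrite Htarget_diag char_poly_trig; last exact: diag_mx_is_trig.
by rewrite !big_ord_recr big_ord0 !big_cons big_nil /= !mxE /=; ring.
Qed.

Lemma Htarget_top3 : exists l, eigen_desc Htarget l /\ topsum l 3 = 5 / 6.
Proof.
exists [:: 2^-1; 6^-1; 6^-1; 6^-1; 0; 0; 0; 0]; split; first exact: Htarget_eigen_desc.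
by rewrite /topsum !big_ord_recr big_ord0 /=; field.
Qed.

Lemma Hgen_Qhalf pAB pAC pBC : Hgen pAB pAC pBC =
  6^-1 *: (embAB (proj pAB) 1%:M + embAC (proj pAC) 1%:M + embBC (proj pBC) 1%:M).
Proof.
have mu_half : mu * 2^-1 = 6^-1 by rewrite /mu -invfM -natrM.
by rewrite /Hgen embAB_Qhalf embAC_Qhalf embBC_Qhalf !scalerA mu_half -!scalerDr.
Qed.

Lemma ktens_ket0 : ktens ket0 ket0 = ket2 0 0.
Proof.
apply/matrixP => i j; rewrite (ord1 j) !mxE.
by ord4 i; rewrite -!val_eqE /= !inordK //=; ring.
Qed.

Lemma Hgen_target_Htarget : Hgen_target = Htarget.
Proof.
have -> : Hgen_target = Hgen (ktens ket0 ket0) (ktens ket0 ket0) (ktens ket0 ket0) by [].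
by rewrite Hgen_Qhalf ktens_ket0.
Qed.

Theorem mainTheorem1 :
  (exists l, eigen_desc Hmat l /\ topsum l 3 > 5 / 6)
  /\ (exists l, eigen_desc Htarget l /\ topsum l 3 = 5 / 6)
  /\ ~ majorized Hmat Htarget
  /\ (exists pAB pAC pBC : 'cV[algC]_4,
        [/\ unitvec pAB, unitvec pAC, unitvec pBC
          & ~ majorized (Hgen pAB pAC pBC) Hgen_target]).
Proof.
have [lH [Hl top_H]] := Hmat_top3_gt.
have [lT [Tl top_T]] := Htarget_top3.
have not_maj : ~ majorized Hmat Htarget.
  by apply: (not_majorized_of_topsum (k := 3) Hl Tl) => //; rewrite top_T.
have [uAB uAC uBC] := unitvec_psi.
split; first by exists lH.
split; first by exists lT.
split=> //; exists psiAB, psiAC, psiBC; split=> //.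
by rewrite Hgen_Qhalf -/Hmat Hgen_target_Htarget.
Qed.
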